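(* Let $\boldsymbol\alpha\in\mathbb C^d$, let $\boldsymbol\mu\in V(\boldsymbol\alpha)$ satisfy $\mathcal F(\boldsymbol\alpha+\boldsymbol\mu)=\mathcal F(\boldsymbol\alpha)$, and let $\tau$ be a face of the cone $\mathbb R_{\ge0}A$. Then $E_\tau(\boldsymbol\alpha+\boldsymbol\mu)=\emptyset$ if and only if $E_\tau(\boldsymbol\alpha)=\emptyset$. Moreover, if $E_\tau(\boldsymbol\alpha)\ne\emptyset$, then $E_\tau(\boldsymbol\alpha+\boldsymbol\mu)=\boldsymbol\mu+E_\tau(\boldsymbol\alpha)$.
   Context: $A\subset\mathbb Z^d$ is a finite set generating the group $\mathbb Z^d$; $\mathbb NA$ the monoid generated by $A$. For a facet $\sigma$ of the cone $\mathbb R_{\ge0}A$, $F_\sigma$ is its primitive integral support function: the unique linear form on $\mathbb R^d$ (extended $\mathbb C$-linearly to $\mathbb C^d$) with $F_\sigma(\mathbb R_{\ge0}A)\ge0$, $F_\sigma(\sigma)=0$, $F_\sigma(\mathbb Z^d)=\mathbb Z$. For $\boldsymbol\alpha\in\mathbb C^d$, $\mathcal F(\boldsymbol\alpha)=\{\sigma \text{ facet}: F_\sigma(\boldsymbol\alpha)\in\mathbb Z\}$ and $V(\boldsymbol\alpha)=\bigcap_{\sigma\in\mathcal F(\boldsymbol\alpha)}\{F_\sigma=0\}\subseteq\mathbb C^d$. For a face $\tau$, $E_\tau(\boldsymbol\alpha)=\{\boldsymbol\lambda\in\mathbb C(A\cap\tau)/\mathbb Z(A\cap\tau):\boldsymbol\alpha-\boldsymbol\lambda\in\mathbb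 NA+\mathbb Z(A\cap\tau)\}$. *)

From HB Require Import structures.
From mathcomp Require Import all_boot all_order all_algebra.
From mathcomp Require Import boolp classical_sets reals.
From mathcomp Require Import complex.
Set Implicit Arguments.
Unset Strict Implicit.
Unset Printing Implicit Defensive.
Import Order.TTheory GRing.Theory Num.Theory.
Local Open Scope ring_scope.
Local Open Scope classical_set_scope.

Section ToricDefs.
Variable R : realType.
Variable d : nat.
Variable A : seq 'rV[int]_d.

Definition realv (z : 'rV[int]_d) : 'rV[R]_d := map_mx (fun n : int => n%:~R) z.
Definition cplxv (z : 'rV[int]_d) : 'rV[complex R]_d :=
  map_mx (fun n : int => n%:~R) z.

Definition generates_lattice : Prop :=
  forall z : 'rV[int]_d, exists c : 'I_(size A) -> int,
    z = \sum_(i < size A) c i *: A`_i.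

Definition cone : set 'rV[R]_d :=
  [set x | exists c : 'I_(size A) -> R,
     (forall i, 0 <= c i) /\ x = \sum_(i < size A) c i *: realv A`_i].

Definition linform (f x : 'rV[R]_d) : R := \sum_(j < d) f 0 j * x 0 j.
Definition clinform (f : 'rV[R]_d) (x : 'rV[complex R]_d) : complex R :=
  \sum_(j < d) (real_complex R (f 0 j)) * x 0 j.

(* faces of the cone: intersections with supporting hyperplanes
   (f = 0 gives the cone itself) *)
Definition is_face (t : set 'rV[R]_d) : Prop :=
  exists f : 'rV[R]_d, (forall x, cone x -> 0 <= linform f x) /\
    t = cone `&` [set x | linform f x = 0].

Definition has_indep (S : set 'rV[R]_d) (n : nat) : Prop :=
  exists M : 'M[R]_(n, d), (forall i, S (row i M)) /\ row_free M.
Definition has_dim (S : set 'rV[R]_d) (n : nat) : Prop :=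
  has_indep S n /\ ~ has_indep S n.+1.

Definition is_facet (s : set 'rV[R]_d) : Prop :=
  is_face s /\ exists n, has_dim cone n.+1 /\ has_dim s n.

Definition is_primsupp (s : set 'rV[R]_d) (f : 'rV[R]_d) : Prop :=
  (forall x, cone x -> 0 <= linform f x) /\
  (forall x, s x -> linform f x = 0) /\
  [set linform f (realv z) | z in [set: 'rV[int]_d]] =
    [set (n%:~R : R) | n in [set: int]].

Definition Fsupp (s : set 'rV[R]_d) : 'rV[R]_d := xget 0 (is_primsupp s).

Definition is_int (z : complex R) : Prop := exists n : int, z = n%:~R.

Definition calF (alpha : 'rV[complex R]_d) : set (set 'rV[R]_d) :=
  [set s | is_facet s /\ is_int (clinform (Fsupp s) alpha)].

Definition Vset (alpha : 'rV[complex R]_d) : set 'rV[complex R]_d :=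
  [set mu | forall s, calF alpha s -> clinform (Fsupp s) mu = 0].

Definition inFace (t : set 'rV[R]_d) (i : 'I_(size A)) : bool :=
  `[< t (realv A`_i) >].

Definition Cspan (t : set 'rV[R]_d) : set 'rV[complex R]_d :=
  [set \sum_(i < size A | inFace t i) c i *: cplxv A`_i
     | c in [set: 'I_(size A) -> complex R]].

Definition Zspan (t : set 'rV[R]_d) : set 'rV[complex R]_d :=
  [set \sum_(i < size A | inFace t i) (c i)%:~R *: cplxv A`_i
     | c in [set: 'I_(size A) -> int]].

Definition NA : set 'rV[complex R]_d :=
  [set \sum_(i < size A) (c i)%:R *: cplxv A`_i
     | c in [set: 'I_(size A) -> nat]].

(* E_tau(alpha): a set of cosets lambda = lambda0 + Z(A∩tau) in
   C(A∩tau)/Z(A∩tau) (each coset represented as a subset of C^d),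
   such that alpha - lambda ⊆ NA + Z(A∩tau) *)
Definition Etau (t : set 'rV[R]_d) (alpha : 'rV[complex R]_d)
    : set (set 'rV[complex R]_d) :=
  [set L | exists lam0, Cspan t lam0 /\
     L = [set lam0 + z | z in Zspan t] /\
     exists y z, NA y /\ Zspan t z /\ alpha - lam0 = y + z].

Definition translate (mu : 'rV[complex R]_d) (L : set 'rV[complex R]_d) :=
  [set mu + x | x in L].

End ToricDefs.

From HB Require Import structures.
From mathcomp Require Import all_boot all_order all_algebra.
From mathcomp Require Import boolp classical_sets reals.
From mathcomp Require Import complex.
From mathcomp Require Import ring lra zify.
Import Order.TTheory GRing.Theory Num.Theory.
Local Open Scope ring_scope.
Local Open Scope classical_set_scope.
Set Implicit Arguments.
Unset Strict Implicit.
Unset Printing Implicit Defensive.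

(* If [E_tau(alpha)] contains the class of [lambda], then
   [alpha = lambda + y + z] with [lambda] in [C(A cap tau)], [y] in [NA] and
   [z] in [Z(A cap tau)]; every facet [sigma] containing [tau] kills [lambda]
   and [z] and is integral on [y], so [sigma] is in [F(alpha)] and
   [F_sigma(mu) = 0].  The real span of [A cap tau] is cut out by these
   [F_sigma]: if [x] lies outside it, take a form that is [>= 0] on [A],
   vanishes on [A cap tau] but not at [x], and whose zero set in [A] is
   maximal; every form vanishing on that zero set is proportional to it, so
   it defines a facet, and a primitive integral kernel vector, suitably
   signed, is the support function of that facet, which does not vanish at
   [x].  Hence [mu] lies in [C(A cap tau)], and translation by [mu] maps
   [E_tau(alpha)] onto [E_tau(alpha + mu)].  As [F(alpha + mu) = F(alpha)],
   [-mu] lies in [V(alpha + mu)], which gives the converse. *)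

Lemma rank_lt_kernel (F : fieldType) m n (M : 'M[F]_(m, n)) :
  (\rank M < n)%N -> exists2 g : 'rV_n, g != 0 & g *m M^T = 0.
Proof.
move=> ltMn; have : kermx M^T != 0 by rewrite kermx_eq0 /row_free mxrank_tr ltn_eqF.
by case/rowV0Pn => g /sub_kermxP gM0 g0; exists g.
Qed.

Lemma rat_row_int_multiple n (g : 'rV[rat]_n) :
  exists2 D : int, D != 0 & exists v : 'rV[int]_n, map_mx (fun z => z%:~R) v = D%:~R *: g.
Proof.
exists (\prod_(k < n) denq (g 0 k)); first by rewrite gt_eqF // prodr_gt0.
exists (\row_j (numq (g 0 j) * \prod_(k < n | k != j) denq (g 0 k))).
apply/rowP => j; rewrite !mxE rmorphM /= numqE [in RHS](bigD1 j) //= rmorphM; ring.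
Qed.

Lemma int_row_primitive n (v : 'rV[int]_n) : v != 0 ->
  exists k : int, exists w : 'rV[int]_n,
    [/\ k != 0, v = k *: w & exists z : 'rV[int]_n, (w *m z^T) 0 0 = 1].
Proof.
move=> v0; pose val (z : 'rV[int]_n) : int := (v *m z^T) 0 0.
have val_delta j : val (delta_mx 0 j) = v 0 j by rewrite /val trmx_delta -colE mxE.
have valZ q z : val (q *: z) = q * val z by rewrite /val linearZ /= -scalemxAr mxE.
have valB z z' : val (z - z') = val z - val z' by rewrite /val linearB /= mulmxBr !mxE.
pose P k := `[< (0 < k)%N /\ exists z, val z = k%:Z >].
have [j0 vj0] := rV0Pn _ v0.
have exP : exists k, P k.
  exists (absz (v 0 j0)); apply/asboolP; split; first by rewrite absz_gt0.
  by exists (sgz (v 0 j0) *: delta_mx 0 j0); rewrite valZ val_delta abszEsg.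
(* The least positive value [g] of [z |-> v z^T] divides every entry of [v]. *)
case: (ex_minnP exP) => g /asboolP [g_gt0 [z0 val_z0]] g_min.
have g_dvd j : modz (v 0 j) g%:Z = 0.
  set r := modz (v 0 j) g%:Z.
  have [r_ge0 r_lt] : 0 <= r /\ r < g%:Z by rewrite modz_ge0 ?ltz_pmod // eqz_nat -lt0n.
  have val_r : val (delta_mx 0 j - divz (v 0 j) g%:Z *: z0) = r.
    by rewrite valB valZ val_delta val_z0 {1}(divz_eq (v 0 j) g%:Z) addrAC subrr add0r.
  apply/eqP; apply: contraT => r0.
  have : P (absz r).
    apply/asboolP; split; first by rewrite absz_gt0.
    by exists (delta_mx 0 j - divz (v 0 j) g%:Z *: z0); rewrite val_r gez0_abs.
  by move/g_min; rewrite leqNgt -ltz_nat gez0_abs ?r_lt.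
pose w := \row_j divz (v 0 j) g%:Z.
have vw : v = g%:Z *: w.
  by apply/rowP => j; rewrite !mxE {1}(divz_eq (v 0 j) g%:Z) g_dvd addr0 mulrC.
have g0 : g%:Z != 0 by rewrite eqz_nat -lt0n.
exists g%:Z, w; split => //; exists z0.
by apply: (mulfI g0); rewrite mulr1 -[in RHS]val_z0 /val [in RHS]vw -scalemxAl [RHS]mxE.
Qed.

Lemma bounded_by_multiple (F : realFieldType) n (u v : 'I_n -> F) :
  (forall i, 0 <= v i) -> (forall i, v i = 0 -> u i = 0) ->
  exists N, forall i, `|u i| <= N * v i.
Proof.
move=> v_ge0 uv0; exists (\sum_i `|u i| / v i) => i.
have [vi0|vi_neq0] := eqVneq (v i) 0; first by rewrite vi0 uv0 // normr0 mulr0.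
have vi_gt0 : 0 < v i by rewrite lt_def vi_neq0 v_ge0.
rewrite -ler_pdivrMr // (bigD1 i) //= lerDl sumr_ge0 // => k _.
by rewrite divr_ge0 ?v_ge0.
Qed.

Section LinearForms.
Variables (R : realType) (d : nat).
Implicit Types (f g x y : 'rV[R]_d).

Lemma linformZr f c x : linform f (c *: x) = c * linform f x.
Proof. by rewrite /linform mulr_sumr; apply: eq_bigr => j _; rewrite mxE mulrCA. Qed.

Lemma linform0r f : linform f 0 = 0.
Proof. by rewrite /linform big1 // => j _; rewrite mxE mulr0. Qed.

Lemma linform_sumr f (I : finType) (P : pred I) (F : I -> 'rV[R]_d) :
  linform f (\sum_(i | P i) F i) = \sum_(i | P i) linform f (F i).
Proof.
rewrite /linform exchange_big /=; apply: eq_bigr => j _.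
by rewrite summxE mulr_sumr.
Qed.

Lemma linformDl f g x : linform (f + g) x = linform f x + linform g x.
Proof. by rewrite /linform -big_split; apply: eq_bigr => j _; rewrite mxE mulrDl. Qed.

Lemma linformZl c f x : linform (c *: f) x = c * linform f x.
Proof. by rewrite /linform mulr_sumr; apply: eq_bigr => j _; rewrite mxE mulrA. Qed.

Lemma linformNl f x : linform (- f) x = - linform f x.
Proof. by rewrite -scaleN1r linformZl mulN1r. Qed.

Lemma linformBl f g x : linform (f - g) x = linform f x - linform g x.
Proof. by rewrite linformDl linformNl. Qed.

Lemma linform0l x : linform 0 x = 0.
Proof. by rewrite /linform big1 // => j _; rewrite mxE mul0r. Qed.

Lemma linform_row m (M : 'M[R]_(m, d)) g i : linform g (row i M) = (g *m M^T) 0 i.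
Proof. by rewrite /linform mxE; apply: eq_bigr => j _; rewrite !mxE. Qed.

Lemma linform_col p (C : 'M[R]_(d, p)) j x : linform (col j C)^T x = (x *m C) 0 j.
Proof. by rewrite /linform mxE; apply: eq_bigr => k _; rewrite !mxE mulrC. Qed.

Lemma linform_int (p q : 'rV[int]_d) :
  linform (realv R p) (realv R q) = ((p *m q^T) 0 0)%:~R.
Proof. by rewrite /linform mxE rmorph_sum; apply: eq_bigr => j _; rewrite !mxE rmorphM. Qed.

Lemma realvZ (c : int) (z : 'rV[int]_d) : realv R (c *: z) = c%:~R *: realv R z.
Proof. exact: map_mxZ. Qed.

Lemma realv_sum (I : finType) (P : pred I) (F : I -> 'rV[int]_d) :
  realv R (\sum_(i | P i) F i) = \sum_(i | P i) realv R (F i).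
Proof. exact: map_mx_sum. Qed.

Lemma rank_lt_annihilator m (M : 'M[R]_(m, d)) : (\rank M < d)%N ->
  exists2 g, g != 0 & forall i, linform g (row i M) = 0.
Proof.
by case/rank_lt_kernel => g g0 gM0; exists g => // i; rewrite linform_row gM0 mxE.
Qed.

Lemma rank_full_annihilator m (M : 'M[R]_(m, d)) g : \rank M = d ->
  (forall i, linform g (row i M) = 0) -> g = 0.
Proof.
move=> rkM gM0; apply: (@row_free_inj _ _ _ _ M^T); first by rewrite /row_free mxrank_tr rkM.
by rewrite mul0mx; apply/rowP => i; rewrite -linform_row gM0 mxE.
Qed.

Lemma notin_submx_annihilator m (M : 'M[R]_(m, d)) x : ~~ (x <= M)%MS ->
  exists2 g, linform g x != 0 & forall i, linform g (row i M) = 0.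
Proof.
rewrite submxE => /rV0Pn [j xMj]; exists (col j (cokermx M))^T; first by rewrite linform_col.
by move=> i; rewrite linform_col -row_mul mulmx_coker !mxE.
Qed.

Lemma has_indep_rank (S : set 'rV[R]_d) m (M : 'M[R]_(m, d)) :
  (forall i, S (row i M)) -> has_indep S (\rank M).
Proof.
move=> MS; exists (rowsub (maxrankfun M) M); split; last exact: maxrowsub_free.
by move=> k; rewrite row_rowsub.
Qed.

Lemma has_indep_le_dim (S : set 'rV[R]_d) k : has_indep S k -> (k <= d)%N.
Proof. by case=> M [_ /eqP <-]; exact: rank_leq_col. Qed.

End LinearForms.

Section ComplexLinearForms.
Variables (R : realType) (d : nat).
Implicit Types (f : 'rV[R]_d) (x y : 'rV[R[i]]_d).

Lemma clinformD f x y : clinform f (x + y) = clinform f x + clinform f y.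
Proof. by rewrite /clinform -big_split; apply: eq_bigr => j _; rewrite mxE mulrDr. Qed.

Lemma clinformZ f c x : clinform f (c *: x) = c * clinform f x.
Proof. by rewrite /clinform mulr_sumr; apply: eq_bigr => j _; rewrite mxE mulrCA. Qed.

Lemma clinformN f x : clinform f (- x) = - clinform f x.
Proof. by rewrite -scaleN1r clinformZ mulN1r. Qed.

Lemma clinform_sum f (I : finType) (P : pred I) (F : I -> 'rV[R[i]]_d) :
  clinform f (\sum_(i | P i) F i) = \sum_(i | P i) clinform f (F i).
Proof.
rewrite /clinform exchange_big /=; apply: eq_bigr => j _.
by rewrite summxE mulr_sumr.
Qed.

Lemma clinform_cplxv f (z : 'rV[int]_d) :
  clinform f (cplxv R z) = (linform f (realv R z))%:C%C.
Proof.
rewrite /clinform /linform rmorph_sum; apply: eq_bigr => j _.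
by rewrite !mxE rmorphM rmorph_int.
Qed.

Lemma clinform_cplxv_eq0 f (z : 'rV[int]_d) :
  linform f (realv R z) = 0 -> clinform f (cplxv R z) = 0.
Proof. by rewrite clinform_cplxv => ->; rewrite rmorph0. Qed.

Definition Re_mx x : 'rV[R]_d := map_mx (@complex.Re R) x.
Definition Im_mx x : 'rV[R]_d := map_mx (@complex.Im R) x.

Lemma clinform_eq0 f x : clinform f x = 0 ->
  linform f (Re_mx x) = 0 /\ linform f (Im_mx x) = 0.
Proof.
have -> : clinform f x = (linform f (Re_mx x))%:C%C + 'i%C * (linform f (Im_mx x))%:C%C.
  rewrite /clinform /linform !rmorph_sum mulr_sumr -big_split; apply: eq_bigr => j _.
  by rewrite !mxE {1}[x 0 j]complexE mulrDr mulrCA -!rmorphM.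
move/eqP; rewrite eq_complex /= => /andP [/eqP reE /eqP imE].
by move: reE imE; rewrite !(mul0r, mul1r, mulr0, subr0, addr0, add0r).
Qed.
End ComplexLinearForms.

Section Cone.
Variables (R : realType) (d : nat) (A : seq 'rV[int]_d).
Local Notation n := (size A).
Local Notation a i := (realv R A`_i).

Lemma cone_gen (i : 'I_n) : cone A (a i).
Proof.
exists (fun k => (k == i)%:R); split=> [k|]; first exact: ler0n.
by rewrite (bigD1 i) //= eqxx scale1r big1 ?addr0 // => k /negbTE ->; rewrite scale0r.
Qed.

Lemma cone0 : cone A (0 : 'rV[R]_d).
Proof. by exists (fun=> 0); split=> //; rewrite big1 // => k _; rewrite scale0r. Qed.

Lemma cone_ge0 g : (forall i : 'I_n, 0 <= linform g (a i)) ->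
  forall y, cone A y -> 0 <= linform g y.
Proof.
move=> g_ge0 y [c [c_ge0 ->]]; rewrite linform_sumr sumr_ge0 // => i _.
by rewrite linformZr mulr_ge0.
Qed.

Definition genmx (P : pred 'I_n) : 'M[R]_(n, d) := \matrix_i (if P i then a i else 0).

Lemma row_genmx P i : row i (genmx P) = if P i then a i else 0.
Proof. exact: rowK. Qed.

Lemma genmx_span P x : (x <= genmx P)%MS ->
  exists c : 'I_n -> R, x = \sum_(i | P i) c i *: a i.
Proof.
case/submxP => D ->; exists (D 0); rewrite mulmx_sum_row [RHS]big_mkcond /=.
by apply: eq_bigr => i _; rewrite row_genmx; case: (P i); rewrite ?scaler0.
Qed.

Hypothesis hA : generates_lattice A.

Lemma linform_gens_eq0 g : (forall i : 'I_n, linform g (a i) = 0) -> g = 0.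
Proof.
move=> gA0; apply/rowP => j; rewrite mxE.
have -> : g 0 j = linform g (realv R (delta_mx 0 j)).
  by rewrite /realv map_delta_mx -row1 linform_row trmx1 mulmx1.
have [c ->] := hA (delta_mx 0 j); rewrite realv_sum linform_sumr big1 // => i _.
by rewrite realvZ linformZr gA0 mulr0.
Qed.

Lemma rank_genmxT : \rank (genmx predT) = d.
Proof.
apply/eqP; rewrite eqn_leq rank_leq_col leqNgt; apply/negP.
case/rank_lt_annihilator => g /negP g0 gA; apply/g0/eqP/linform_gens_eq0 => i.
by have := gA i; rewrite row_genmx.
Qed.

Lemma cone_has_indep : has_indep (@cone R d A) d.
Proof.
have := @has_indep_rank R d (@cone R d A) _ (genmx predT); rewrite rank_genmxT; apply=> i.
by rewrite row_genmx; exact: cone_gen.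
Qed.

Section SeparatingForm.
Variables (tau : set 'rV[R]_d) (f : 'rV[R]_d).
Hypothesis f_ge0 : forall y, cone A y -> 0 <= linform f y.
Hypothesis tauE : tau = cone A `&` [set y | linform f y = 0].
Variable x : 'rV[R]_d.

Lemma inFaceE (i : 'I_n) : inFace tau i = (linform f (a i) == 0).
Proof.
rewrite /inFace tauE; apply/asboolP/eqP => [[_ ->] //| fi0].
by split; [exact: cone_gen | exact: fi0].
Qed.

Definition separating h := [/\ forall i : 'I_n, 0 <= linform h (a i),
  forall i : 'I_n, inFace tau i -> linform h (a i) = 0 & linform h x != 0].

Lemma separating_exists : ~~ (x <= genmx (inFace tau))%MS -> exists h, separating h.
Proof.
move=> x_notin.
have [g gx0 g_tau] := notin_submx_annihilator x_notin.
have g_face (i : 'I_n) : inFace tau i -> linform g (a i) = 0.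
  by move=> taui; have := g_tau i; rewrite row_genmx taui.
have [N gN] : exists N, forall i : 'I_n, `|linform g (a i)| <= N * linform f (a i).
  apply: bounded_by_multiple => [i|i fi0]; first exact/f_ge0/cone_gen.
  by apply: g_face; rewrite inFaceE fi0.
(* Both [N f + g] and [N f - g] are [>= 0] on [A]; one of them is nonzero at [x]. *)
pose hs (b : bool) := N *: f + (-1) ^+ b *: g.
have hsE b y : linform (hs b) y = N * linform f y + (-1) ^+ b * linform g y.
  by rewrite linformDl !linformZl.
have [b hbx] : exists b, linform (hs b) x != 0.
  have [hx0|] := eqVneq (linform (hs false) x) 0; last by exists false.
  exists true; apply: contra gx0; move: hx0; rewrite !hsE expr0 expr1 => ? /eqP ?.
  apply/eqP; lra.
exists (hs b); split=> // i; rewrite hsE.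
  by have := gN i; rewrite -(normrMsign b) => /lerNnormlW; lra.
by move=> taui; move: (taui); rewrite inFaceE => /eqP ->; rewrite g_face // !mulr0 addr0.
Qed.

Definition zeroset h : {set 'I_n} := [set i : 'I_n | linform h (a i) == 0].

Lemma separating_maximal : ~~ (x <= genmx (inFace tau))%MS ->
  exists h, separating h /\
    forall h', separating h' -> (#|zeroset h'| <= #|zeroset h|)%N.
Proof.
move=> x_notin.
pose P k := `[< exists h, separating h /\ #|zeroset h| = k >].
have exP : exists k, P k.
  have [h h_sep] := separating_exists x_notin.
  by exists #|zeroset h|; apply/asboolP; exists h.
have ubP k : P k -> (k <= n)%N.
  by case/asboolP => h [_ <-]; rewrite -[X in (_ <= X)%N]card_ord max_card.
case: (ex_maxnP exP ubP) => k /asboolP [h [h_sep <-]] k_max.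
by exists h; split=> // h' h'_sep; apply/k_max/asboolP; exists h'.
Qed.

Section MaximalSeparating.
Variable h : 'rV[R]_d.
Hypothesis h_sep : separating h.
Hypothesis h_max : forall h', separating h' -> (#|zeroset h'| <= #|zeroset h|)%N.

Lemma hx_neq0 : linform h x != 0.
Proof. by case: h_sep. Qed.

(* Otherwise [h + t g], for the largest [t] keeping it nonnegative on [A],
   would separate [x] with a strictly larger zero set. *)
Lemma annihilator_ge0 g : (forall i, i \in zeroset h -> linform g (a i) = 0) ->
  linform g x = 0 -> forall i : 'I_n, 0 <= linform g (a i).
Proof.
move=> g_ann gx0 i0; rewrite leNgt; apply/negP => gi0_lt0.
have [h_ge0 h_face hx0] := h_sep.
pose ratio (i : 'I_n) := linform h (a i) / - linform g (a i).
case: (@arg_minP _ _ _ i0 (fun i => linform g (a i) < 0) ratio gi0_lt0) => j gj_lt0 j_min.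
pose t := ratio j; pose h' := h + t *: g.
have t_ge0 : 0 <= t by rewrite divr_ge0 // oppr_ge0 ltW.
have h'E y : linform h' y = linform h y + t * linform g y.
  by rewrite linformDl linformZl.
have h'_sep : separating h'.
  split=> [i|i taui|]; rewrite h'E.
  - have [gi_ge0|gi_lt0] := leP 0 (linform g (a i)); first exact/addr_ge0/mulr_ge0.
    have := j_min i gi_lt0; rewrite -/t ler_pdivlMr ?oppr_gt0 // mulrN; lra.
  - by rewrite h_face // g_ann ?mulr0 ?addr0 // inE h_face.
  - by rewrite gx0 mulr0 addr0.
have j_notin : j \notin zeroset h.
  by apply: contraTN gj_lt0 => /g_ann ->; rewrite ltxx.
have : (j |: zeroset h)%SET \subset zeroset h'.
  apply/fintype.subsetP => i; rewrite !inE => /orP [/eqP ->|/eqP hi0].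
    have gj0 : linform g (a j) != 0 by rewrite lt_eqF.
    by apply/eqP; rewrite h'E /t /ratio; field.
  by rewrite h'E hi0 g_ann ?mulr0 ?addr0 // inE hi0.
move/subset_leq_card; rewrite cardsU1 j_notin add1n => /leq_trans/(_ (h_max h'_sep)).
by rewrite ltnn.
Qed.

Lemma annihilator_eq0 g : (forall i, i \in zeroset h -> linform g (a i) = 0) ->
  linform g x = 0 -> g = 0.
Proof.
move=> g_ann gx0; apply: linform_gens_eq0 => i; apply/eqP; rewrite eq_le.
rewrite annihilator_ge0 // andbT -oppr_ge0 -linformNl annihilator_ge0 //.
  by move=> k /g_ann; rewrite linformNl => ->; rewrite oppr0.
by rewrite linformNl gx0 oppr0.
Qed.

Lemma annihilator_colinear g : (forall i, i \in zeroset h -> linform g (a i) = 0) ->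
  g = (linform g x / linform h x) *: h.
Proof.
move=> g_ann; apply/eqP; rewrite -subr_eq0; apply/eqP/annihilator_eq0 => [i zi|].
  move: (zi); rewrite inE => /eqP hi0.
  by rewrite linformBl linformZl g_ann // hi0 mulr0 subr0.
by rewrite linformBl linformZl divfK ?hx_neq0 ?subrr.
Qed.

Lemma dim_gt0 : (0 < d)%N.
Proof.
rewrite lt0n; apply: contra hx_neq0 => /eqP d0.
by rewrite /linform big1 // => j; have := ltn_ord j; rewrite {2}d0.
Qed.

Definition zeroset_mx := genmx (fun i => i \in zeroset h).

Lemma rank_zeroset_mx : \rank zeroset_mx = d.-1.
Proof.
have h_ann i : linform h (row i zeroset_mx) = 0.
  by rewrite row_genmx; case: ifP => [|_]; [rewrite inE => /eqP | exact: linform0r].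
have rk_lt : (\rank zeroset_mx < d)%N.
  rewrite ltn_neqAle rank_leq_col andbT; apply/eqP => rk.
  by move: hx_neq0; rewrite (rank_full_annihilator rk h_ann) linform0l eqxx.
apply/eqP; rewrite eqn_leq -ltnS prednK ?dim_gt0 // rk_lt /= leqNgt; apply/negP => rk_small.
have : (\rank (col_mx zeroset_mx x) < d)%N.
  rewrite -addsmxE; apply: leq_ltn_trans (mxrank_adds_leqif _ _).1 _.
  have := rank_leq_row x; have := dim_gt0; lia.
case/rank_lt_annihilator => g /negP g0 g_ann; apply/g0/eqP/annihilator_eq0.
  by move=> i zi; have := g_ann (lshift 1 i); rewrite rowKu row_genmx zi.
by have := g_ann (rshift n 0); rewrite rowKd row_id.
Qed.

Lemma int_annihilator : exists2 v : 'rV[int]_d, v != 0 &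
  forall i, i \in zeroset h -> linform (realv R v) (a i) = 0.
Proof.
pose Mq : 'M[rat]_(n, d) :=
  \matrix_(i, j) (if i \in zeroset h then (A`_i 0 j)%:~R else 0).
have Mq_real : map_mx ratr Mq = zeroset_mx.
  apply/matrixP => i j; rewrite !mxE.
  by case: ifP => _; rewrite ?mxE ?ratr_int ?rmorph0.
have [|g g0 gMq] := @rank_lt_kernel _ _ _ Mq.
  by rewrite -(mxrank_map (@ratr R)) Mq_real rank_zeroset_mx prednK ?dim_gt0.
have [D D0 [v vE]] := rat_row_int_multiple g.
exists v.
  apply: contraNneq g0 => v0; move: vE; rewrite v0 map_mx0 => /esym/eqP.
  by rewrite scaler_eq0 intr_eq0 (negbTE D0).
move=> i zi; have -> : a i = row i zeroset_mx by rewrite row_genmx zi.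
have -> : realv R v = map_mx ratr (map_mx (fun z => z%:~R) v).
  by apply/rowP => j; rewrite !mxE ratr_int.
rewrite linform_row -Mq_real map_trmx -map_mxM vE -scalemxAl gMq scaler0.
by rewrite map_mx0 mxE.
Qed.

Definition hface := cone A `&` [set y | linform h y = 0].

Lemma hface_gen i : i \in zeroset h -> hface (a i).
Proof. by rewrite inE => /eqP hi0; split; first exact: cone_gen. Qed.

Lemma is_facet_hface : is_facet A hface.
Proof.
have [h_ge0 _ hx0] := h_sep.
split; first by exists h; split; first exact: cone_ge0.
exists d.-1; split.
  rewrite prednK ?dim_gt0 //; split; first exact: cone_has_indep.
  by move/has_indep_le_dim; rewrite ltnn.
split.
  have := @has_indep_rank R d hface _ zeroset_mx; rewrite rank_zeroset_mx; apply=> i.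
  rewrite row_genmx; case: ifP => [/hface_gen //|_].
  by split; [exact: cone0 | exact: linform0r].
rewrite prednK ?dim_gt0 // => -[M [M_face /eqP rkM]].
have M_ann i : linform h (row i M) = 0 by have [] := M_face i.
by move: hx0; rewrite (rank_full_annihilator rkM M_ann) linform0l eqxx.
Qed.

Lemma primsupp_hface : exists F, is_primsupp A hface F.
Proof.
have [h_ge0 _ _] := h_sep.
have [v v0 v_ann] := int_annihilator.
have [k [w [k0 vkw [z0 wz0]]]] := int_row_primitive v0.
have w_ann i : i \in zeroset h -> linform (realv R w) (a i) = 0.
  move=> zi; have /eqP := v_ann i zi; rewrite vkw realvZ linformZl.
  by rewrite mulf_eq0 intr_eq0 (negbTE k0) => /eqP.
set c := linform (realv R w) x / linform h x.
have wE : realv R w = c *: h := annihilator_colinear w_ann.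
have wz1 : linform (realv R w) (realv R z0) = 1 by rewrite linform_int wz0.
have c0 : c != 0.
  by apply: contra_eq_neq wz1 => c0; rewrite wE c0 scale0r linform0l eq_sym oner_eq0.
exists (realv R (sgz c *: w)); split; last split.
- move=> y y_cone; rewrite realvZ wE scalerA -sgrEz -normrEsg linformZl.
  by rewrite mulr_ge0 // cone_ge0.
- by move=> y [_ hy0]; rewrite realvZ wE linformZl linformZl hy0 !mulr0.
apply/seteqP; split=> r /= [z _ <-].
  by exists (((sgz c *: w) *m z^T) 0 0) => //; rewrite linform_int.
exists ((z * sgz c) *: z0) => //.
by rewrite !realvZ linformZr linformZl wz1 mulr1 -intrM -mulrA mulz_sg c0 mulr1.
Qed.

Lemma Fsupp_hface_x : linform (Fsupp A hface) x != 0.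
Proof.
have [_ [F0 F_im]] : is_primsupp A hface (Fsupp A hface) := xgetPex 0 primsupp_hface.
have F_colin := annihilator_colinear (fun i zi => F0 _ (hface_gen zi)).
apply/eqP => Fx0; move: F_colin; rewrite Fx0 mul0r scale0r => F_eq0.
have : [set (k%:~R : R) | k in [set: int]] 1 by exists 1.
by rewrite -F_im F_eq0 => -[z _]; rewrite linform0l => /eqP; rewrite eq_sym oner_eq0.
Qed.

End MaximalSeparating.
End SeparatingForm.

Lemma face_separating_facet (tau : set 'rV[R]_d) x :
  is_face A tau -> ~~ (x <= genmx (inFace tau))%MS ->
  exists s, [/\ is_facet A s, forall i : 'I_n, inFace tau i -> s (a i),
    is_primsupp A s (Fsupp A s) & linform (Fsupp A s) x != 0].
Proof.
case=> f [f_ge0 tauE] x_notin.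
have [h [h_sep h_max]] := separating_maximal f_ge0 tauE x_notin.
exists (hface h); split.
- exact: is_facet_hface h_sep h_max.
- by move=> i taui; split; [exact: cone_gen | case: h_sep => _ /(_ i taui)].
- by rewrite /Fsupp; apply: xgetPex; exact: primsupp_hface h_sep h_max.
- exact: Fsupp_hface_x h_sep h_max.
Qed.

Lemma face_span_of_facets (tau : set 'rV[R]_d) x : is_face A tau ->
  (forall s, is_facet A s -> (forall i : 'I_n, inFace tau i -> s (a i)) ->
     is_primsupp A s (Fsupp A s) -> linform (Fsupp A s) x = 0) ->
  exists c : 'I_n -> R, x = \sum_(i | inFace tau i) c i *: a i.
Proof.
move=> tau_face x_facets; apply: genmx_span; apply: contraT => x_notin.
have [s [s_facet s_tau s_prim sx]] := face_separating_facet tau_face x_notin.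
by rewrite (x_facets s s_facet s_tau s_prim) eqxx in sx.
Qed.

End Cone.

Section Exponents.
Variables (R : realType) (d : nat) (A : seq 'rV[int]_d).
Local Notation n := (size A).
Local Notation a i := (realv R A`_i).
Implicit Types (tau : set 'rV[R]_d) (alpha mu : 'rV[R[i]]_d).

Lemma Cspan_add tau u v : Cspan A tau u -> Cspan A tau v -> Cspan A tau (u + v).
Proof.
move=> [c _ <-] [e _ <-]; exists (fun i => c i + e i) => //.
by rewrite -big_split; apply: eq_bigr => i _; rewrite scalerDl.
Qed.

Lemma Cspan_opp tau u : Cspan A tau u -> Cspan A tau (- u).
Proof.
move=> [c _ <-]; exists (fun i => - c i) => //.
by rewrite -sumrN; apply: eq_bigr => i _; rewrite scaleNr.
Qed.

Lemma translate_coset mu lam (Z : set 'rV[R[i]]_d) :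
  translate mu [set lam + z | z in Z] = [set (mu + lam) + z | z in Z].
Proof. by rewrite /translate image_comp; apply: eq_imagel => z _ /=; rewrite addrA. Qed.

Lemma Etau_translate tau alpha mu : Cspan A tau mu ->
  Etau A tau (alpha + mu) = [set translate mu L | L in Etau A tau alpha].
Proof.
move=> mu_C; apply/seteqP; split=> L.
  case=> lam [lam_C [-> [y [z [y_NA [z_Z alphaE]]]]]].
  exists [set (lam - mu) + z | z in Zspan A tau]; last first.
    by rewrite translate_coset addrCA subrr addr0.
  exists (lam - mu); split; first exact/Cspan_add/Cspan_opp.
  split=> //; exists y, z; split=> //; split=> //.
  by rewrite -alphaE opprB addrA.
case=> L0 [lam [lam_C [-> [y [z [y_NA [z_Z alphaE]]]]]]] <-.
exists (mu + lam); split; first exact: Cspan_add.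
split; first exact: translate_coset.
exists y, z; split=> //; split=> //.
by rewrite -alphaE opprD addrA addrK.
Qed.

Lemma is_int_sum (I : finType) (P : pred I) (G : I -> R[i]) :
  (forall i, P i -> is_int (G i)) -> is_int (\sum_(i | P i) G i).
Proof.
move=> G_int; apply: (big_ind (@is_int R)) => //; first by exists 0.
by move=> _ _ [p ->] [q ->]; exists (p + q); rewrite rmorphD.
Qed.

Lemma Etau_calF tau alpha L s : Etau A tau alpha L -> is_facet A s ->
  (forall i : 'I_n, inFace tau i -> s (a i)) -> is_primsupp A s (Fsupp A s) ->
  calF A alpha s.
Proof.
case=> lam [lam_C [_ [y [z [y_NA [z_Z alphaE]]]]]] s_facet s_tau [_ [F_face F_im]].
split=> //.
have F_tau (c : 'I_n -> R[i]) :
    clinform (Fsupp A s) (\sum_(i | inFace tau i) c i *: cplxv R A`_i) = 0.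
  rewrite clinform_sum big1 // => i taui.
  by rewrite clinformZ clinform_cplxv_eq0 ?mulr0 //; apply/F_face/s_tau.
have -> : alpha = lam + (y + z) by rewrite -alphaE addrC subrK.
case: lam_C => c _ <-; case: z_Z => e _ <-; case: y_NA => m _ <-.
rewrite !clinformD !F_tau add0r addr0 clinform_sum; apply: is_int_sum => i _.
rewrite clinformZ clinform_cplxv.
have : [set (k%:~R : R) | k in [set: int]] (linform (Fsupp A s) (a i)).
  by rewrite -F_im; exists A`_i.
by case=> k _ <-; exists ((m i)%:Z * k); rewrite rmorph_int intrM -pmulrn.
Qed.

Hypothesis hA : generates_lattice A.

Lemma Cspan_of_facets tau mu : is_face A tau ->
  (forall s, is_facet A s -> (forall i : 'I_n, inFace tau i -> s (a i)) ->
     is_primsupp A s (Fsupp A s) -> clinform (Fsupp A s) mu = 0) ->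
  Cspan A tau mu.
Proof.
move=> tau_face mu_facets.
have [c reE] := face_span_of_facets hA tau_face
  (fun s s_facet s_tau s_prim => (clinform_eq0 (mu_facets s s_facet s_tau s_prim)).1).
have [e imE] := face_span_of_facets hA tau_face
  (fun s s_facet s_tau s_prim => (clinform_eq0 (mu_facets s s_facet s_tau s_prim)).2).
exists (fun i => (c i)%:C%C + 'i%C * (e i)%:C%C) => //.
apply/rowP => j; rewrite [RHS]complexE.
move/rowP/(_ j): reE; move/rowP/(_ j): imE; rewrite !mxE !summxE => -> ->.
rewrite !rmorph_sum mulr_sumr -big_split; apply: eq_bigr => i _.
by rewrite !mxE !rmorphM !rmorph_int /=; ring.
Qed.

Lemma Vset_Cspan tau alpha mu L : is_face A tau -> Etau A tau alpha L ->
  Vset A alpha mu -> Cspan A tau mu.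
Proof.
move=> tau_face EL mu_V; apply: Cspan_of_facets => // s s_facet s_tau s_prim.
exact/mu_V/(Etau_calF EL).
Qed.

End Exponents.

Theorem lemma7p2 (R : realType) (d : nat) (A : seq 'rV[int]_d)
  (hA : generates_lattice A)
  (alpha mu : 'rV[complex R]_d) (tau : set 'rV[R]_d)
  (hmu : Vset A alpha mu)
  (hF : calF A (alpha + mu) = calF A alpha)
  (htau : is_face A tau) :
  (Etau A tau (alpha + mu) = set0 <-> Etau A tau alpha = set0) /\
  (Etau A tau alpha <> set0 ->
     Etau A tau (alpha + mu) = [set translate mu L | L in Etau A tau alpha]).
Proof.
have muN_V : Vset A (alpha + mu) (- mu).
  by move=> s; rewrite hF => /hmu; rewrite clinformN => ->; rewrite oppr0.
have shift beta nu L : Vset A beta nu -> Etau A tau beta L ->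
    Etau A tau (beta + nu) = [set translate nu L | L in Etau A tau beta].
  by move=> nu_V EL; apply: Etau_translate; exact: Vset_Cspan EL nu_V.
have shift_neq0 beta nu : Vset A beta nu ->
    Etau A tau beta <> set0 -> Etau A tau (beta + nu) <> set0.
  move=> nu_V /eqP/set0P [L EL]; rewrite (shift _ _ _ nu_V EL).
  by move/image_set0_set0 => E0; rewrite E0 in EL.
split; last by move=> /eqP/set0P [L EL]; exact: shift EL.
split=> E0; apply: contrapT.
  by move/(shift_neq0 _ _ hmu)/(_ E0).
by move/(shift_neq0 _ _ muN_V); rewrite addrK => /(_ E0).
Qed.
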